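(* Let $q$ be a prime power and $n$ a positive integer with $\gcd(q,n)=1$; write $v=\nu_2(n)$ and $n=2^vn'$ with $n'$ odd. Let $s\in\mathbb{Z}_n^*$ and $t\in\mathbb{Z}_n$ with $qt\equiv t\pmod n$. Then Type-I duadic splittings of $\mathbb{Z}_n$ given by $\rho_{s,t}$ exist if and only if Type-I duadic splittings of $\mathbb{Z}_{2^v}$ given by $\rho_{s,t}$ (with $s,t$ reduced modulo $2^v$) exist.
   Context: For a modulus $m$ coprime to $q$, with $s$ coprime to $m$ and $qt\equiv t\pmod m$: $\mu_q:\mathbb{Z}_m\to\mathbb{Z}_m$, $i\mapsto qi\bmod m$; $P\subseteq\mathbb{Z}_m$ is $\mu_q$-invariant if $\mu_q(P)=P$; $\rho_{s,t}:\mathbb{Z}_m\to\mathbb{Z}_m$, $i\mapsto s(i+t)\bmod m$. Type-I duadic splittings of $\mathbb{Z}_m$ given by $\rho_{s,t}$ exist if there is a $\mu_q$-invariant $P\subseteq\mathbb{Z}_m$ with $\mathbb{Z}_m=P\cup\rho_{s,t}(P)$ a disjoint union. $\nu_2$ is the $2$-adic valuation. *)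

From mathcomp Require Import all_boot.
Set Implicit Arguments. Unset Strict Implicit. Unset Printing Implicit Defensive.

(* Z_m is represented by the ordinals 'I_m (residues 0..m-1); this also
   covers m = 1 (Z_1 = {0}). *)

Definition img_mod (m : nat) (f : nat -> nat) (P : {set 'I_m}) : {set 'I_m} :=
  [set j : 'I_m | [exists i in P, val j == f (val i) %% m]].

Definition mu (m q : nat) (P : {set 'I_m}) : {set 'I_m} := img_mod (fun i => q * i) P.

Definition rho (m s t : nat) (P : {set 'I_m}) : {set 'I_m} := img_mod (fun i => s * (i + t)) P.

Definition mu_invariant (m q : nat) (P : {set 'I_m}) : Prop := mu q P = P.

Definition typeI_duadic_exists (q m s t : nat) : Prop :=
  exists P : {set 'I_m},
    mu_invariant q P /\ P :|: rho s t P = setT /\ P :&: rho s t P = set0.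

Definition prime_power (q : nat) : Prop := exists p k, prime p /\ 0 < k /\ q = p ^ k.

From mathcomp Require Import all_boot cyclic ring.
Set Implicit Arguments. Unset Strict Implicit. Unset Printing Implicit Defensive.

(* Write n = d n' with d = 2^v and n' odd, so that Z_n = Z_d x Z_n'.  A splitting
   of Z_d pulls back along the projection Z_n -> Z_d.  Conversely, a splitting of
   Z_n is encoded by its indicator p, with p o mu_q = p and p o rho = ~~ p.  Pick
   an odd L with rho^L = rho on Z_d such that rho^L has 2-power order N on Z_n'.
   As N is invertible modulo n', the average of the rho^L-orbit of 0 is a point
   x0 of Z_n' fixed by the affine map rho^L and, since q t = t, by mu_q.  Then
   y |-> p (y, x0) is the indicator of a splitting of Z_d: on this slice rho^L
   acts as rho on the first coordinate and flips p an odd number of times. *)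

Section Congruence.
Variable m : nat.
Implicit Types a b c d u x y : nat.

Lemma eqm_add a b c d : a = b %[mod m] -> c = d %[mod m] -> a + c = b + d %[mod m].
Proof. by move=> Eab Ecd; rewrite -modnDm Eab Ecd modnDm. Qed.

Lemma eqm_mul a b c d : a = b %[mod m] -> c = d %[mod m] -> a * c = b * d %[mod m].
Proof. by move=> Eab Ecd; rewrite -modnMm Eab Ecd modnMm. Qed.

Lemma eqm_dvd k a b : k %| m -> a = b %[mod m] -> a = b %[mod k].
Proof. by move=> km Eab; rewrite -(modn_dvdm a km) Eab modn_dvdm. Qed.

Lemma eqm_sum I (r : seq I) (P : pred I) (F G : I -> nat) :
  (forall i, F i = G i %[mod m]) ->
  \sum_(i <- r | P i) F i = \sum_(i <- r | P i) G i %[mod m].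
Proof.
by move=> EFG; rewrite -modn_summ -[RHS]modn_summ; congr (_ %% m); apply: eq_bigr.
Qed.

Lemma inv_mod_exists a : 0 < m -> coprime a m -> exists u, u * a = 1 %[mod m].
Proof.
move=> m_gt0 co_am; exists (a ^ (totient m).-1).
by rewrite -expnSr prednK ?totient_gt0 // Euler_exp_totient.
Qed.

Lemma inv_mulK_mod u a x : u * a = 1 %[mod m] -> u * (a * x) = x %[mod m].
Proof. by move=> ua1; rewrite mulnA -modnMml ua1 modnMml mul1n. Qed.

Lemma eqm_mul2l u a x y : u * a = 1 %[mod m] -> a * x = a * y %[mod m] -> x = y %[mod m].
Proof.
by move=> ua1 Eaxy; rewrite -(inv_mulK_mod x ua1) -(inv_mulK_mod y ua1) -modnMmr Eaxy modnMmr.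
Qed.

Definition mod_compatible (f : nat -> nat) :=
  forall x y, x = y %[mod m] -> f x = f y %[mod m].

Lemma iter_mod_compatible f k : mod_compatible f -> mod_compatible (iter k f).
Proof. by move=> cf x y Exy; elim: k => //= k IHk; apply: cf. Qed.

Lemma iter_mod_period f T : mod_compatible f -> (forall x, iter T f x = x %[mod m]) ->
  forall a b x, a = b %[mod T] -> iter a f x = iter b f x %[mod m].
Proof.
move=> cf fT a b x Eab.
have iter_mulT j y : iter (j * T) f y = y %[mod m].
  elim: j y => // j IHj y; rewrite mulSn iterD.
  exact: etrans (iter_mod_compatible _ cf (IHj y)) (fT y).
by rewrite (divn_eq a T) (divn_eq b T) Eab !iterD !iter_mulT.
Qed.

Lemma iter_mod_commute f q : mod_compatible f ->
  (forall x, q * f x = f (q * x) %[mod m]) ->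
  forall k x, q * iter k f x = iter k f (q * x) %[mod m].
Proof.
move=> cf fq; elim=> // k IHk x /=.
exact: etrans (fq _) (cf _ _ (IHk x)).
Qed.

End Congruence.

Lemma iter_flip_parity (f : nat -> nat) (p : pred nat) : (forall x, p (f x) = ~~ p x) ->
  forall k x, p (iter k f x) = odd k (+) p x.
Proof. by move=> pf; elim=> // k IHk x /=; rewrite pf IHk negb_add. Qed.

Definition affine (c : nat) (g : nat -> nat) := forall x, g x = c * x + g 0.

Section Affine.
Variables (c : nat) (g : nat -> nat).
Hypothesis g_affine : affine c g.

Lemma affine_iter k : affine (c ^ k) (iter k g).
Proof.
move=> x; elim: k => [|k IHk] /=; first by rewrite mul1n addn0.
by rewrite g_affine IHk [g (iter k g 0)]g_affine expnS; ring.
Qed.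

Lemma affine_mod_compatible m : mod_compatible m g.
Proof.
by move=> x y Exy; rewrite g_affine [g y]g_affine; apply: eqm_add => //; apply: eqm_mul.
Qed.

Lemma affine_iter_period m o : c ^ o = 1 %[mod m] -> forall x, iter (o * m) g x = x %[mod m].
Proof.
move=> co1 x; rewrite mulnC iterM; set h := iter o g.
have h_affine : affine (c ^ o) h := affine_iter o.
have iter_h j : iter j h x = x + j * h 0 %[mod m].
  elim: j => [|j IHj] /=; first by rewrite addn0.
  rewrite h_affine; apply: etrans (_ : _ = 1 * (x + j * h 0) + h 0 %[mod m]) _.
    by apply: eqm_add => //; apply: eqm_mul.
  by rewrite mul1n mulSn [h 0 + _]addnC addnA.
by rewrite iter_h -modnDmr modnMr addn0.
Qed.

Lemma affine_fixed_point m N w : iter N g 0 = 0 %[mod m] -> w * N = 1 %[mod m] ->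
  g (w * \sum_(i < N) iter i g 0) = w * \sum_(i < N) iter i g 0 %[mod m].
Proof.
move=> gN0 wN1; set S := \sum_(i < N) iter i g 0.
have orbit_shift : c * S + N * g 0 = S + iter N g 0.
  have -> : c * S + N * g 0 = \sum_(i < N) iter i.+1 g 0.
    rewrite big_distrr -[N in N * _]card_ord -sum_nat_const -big_split /=.
    by apply: eq_bigr => i _; rewrite [g (iter i g 0)]g_affine.
  rewrite /S -(big_ord_recr N (fun i => iter i g 0)) big_ord_recl /=.
  by apply: eq_bigr.
apply: (eqm_mul2l wN1); rewrite g_affine (mulnCA N w) inv_mulK_mod //.
have -> : N * (c * (w * S) + g 0) = w * N * (c * S) + N * g 0 by ring.
apply: etrans (_ : _ = c * S + N * g 0 %[mod m]) _.
  by apply: eqm_add => //; rewrite -mulnA (inv_mulK_mod _ wN1).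
by rewrite orbit_shift -modnDmr gN0 mod0n addn0.
Qed.

End Affine.

Arguments affine_mod_compatible {c g} g_affine m.

Lemma affine_common_fixed_point m c g q N : 0 < m -> affine c g ->
    (forall x, q * g x = g (q * x) %[mod m]) -> coprime N m -> iter N g 0 = 0 %[mod m] ->
  exists x0, g x0 = x0 %[mod m] /\ q * x0 = x0 %[mod m].
Proof.
move=> m_gt0 g_affine qg co_Nm gN0; have [w wN1] := inv_mod_exists m_gt0 co_Nm.
exists (w * \sum_(i < N) iter i g 0); split.
  exact: (affine_fixed_point g_affine gN0 wN1).
rewrite mulnCA big_distrr; apply: eqm_mul => //; apply: eqm_sum => i.
by rewrite (iter_mod_commute (affine_mod_compatible g_affine m) qg) muln0.
Qed.

Definition rho_map (s t x : nat) := s * (x + t).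

Lemma rho_map_affine s t : affine s (rho_map s t).
Proof. by move=> x; rewrite /rho_map add0n mulnDr. Qed.

Lemma rho_map_mod_compatible m s t : mod_compatible m (rho_map s t).
Proof. exact: affine_mod_compatible (rho_map_affine s t) m. Qed.

Lemma rho_map_mulC m q s t : q * t = t %[mod m] ->
  forall x, q * rho_map s t x = rho_map s t (q * x) %[mod m].
Proof.
by move=> qt x; rewrite /rho_map mulnCA mulnDr; apply: eqm_mul => //; apply: eqm_add.
Qed.

Lemma rho_map_iter_period m s t : coprime s m ->
  forall x, iter (totient m * m) (rho_map s t) x = x %[mod m].
Proof. by move=> /Euler_exp_totient; apply: (affine_iter_period (rho_map_affine s t)). Qed.

Definition mod_inverse m (f g : nat -> nat) :=
  [/\ mod_compatible m f, mod_compatible m g,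
      forall x, g (f x) = x %[mod m] & forall x, f (g x) = x %[mod m]].

Lemma mul_mod_inverse m q u : u * q = 1 %[mod m] -> mod_inverse m (muln q) (muln u).
Proof.
move=> uq1; split=> [x y Exy|x y Exy|x|x] /=; try exact: eqm_mul.
  exact: inv_mulK_mod.
by rewrite mulnCA; apply: inv_mulK_mod.
Qed.

(* [t * m.-1] stands for [-t] modulo [m], avoiding truncated subtraction. *)
Lemma rho_map_mod_inverse m s t u : 0 < m -> u * s = 1 %[mod m] ->
  mod_inverse m (rho_map s t) (fun x => u * x + t * m.-1).
Proof.
move=> m_gt0 us1; have tm : t + t * m.-1 = t * m by rewrite -mulnS prednK.
split=> [||x|x].
- exact: rho_map_mod_compatible.
- by move=> x y Exy; apply: eqm_add => //; apply: eqm_mul.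
- by rewrite -modnDml inv_mulK_mod // modnDml -addnA tm addnC modnMDl.
- rewrite /rho_map -addnA [t * m.-1 + t]addnC tm mulnDr (mulnCA s u) (mulnA s t m).
  by rewrite addnC modnMDl (inv_mulK_mod x us1).
Qed.

(* A subset P of Z_m is encoded by the m-periodic predicate x |-> (x mod m \in P). *)
Definition duadic_indicator (m q s t : nat) (p : pred nat) :=
  [/\ forall x, p (x %% m) = p x, forall x, p (q * x) = p x
    & forall x, p (rho_map s t x) = ~~ p x].

Lemma pred_mod_eq m (p : pred nat) a b :
  (forall x, p (x %% m) = p x) -> a = b %[mod m] -> p a = p b.
Proof. by move=> p_mod Eab; rewrite -p_mod Eab p_mod. Qed.

Section ImgMod.
Variables (m : nat) (m_gt0 : 0 < m).

Definition ord_mod x : 'I_m := Ordinal (ltn_pmod x m_gt0).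

Lemma ord_mod_eq x y : x = y %[mod m] -> ord_mod x = ord_mod y.
Proof. by move=> Exy; apply: val_inj. Qed.

Lemma ord_mod_val (j : 'I_m) : ord_mod j = j.
Proof. by apply: val_inj; rewrite /= modn_small. Qed.

Variables (f g : nat -> nat) (P : {set 'I_m}).
Hypothesis fg : mod_inverse m f g.

Lemma mem_img_mod (j : 'I_m) : (j \in img_mod f P) = (ord_mod (g j) \in P).
Proof.
have [cf cg gK fK] := fg; rewrite inE; apply/existsP/idP => [[i /andP[iP /eqP ->]]|gjP].
  by rewrite (ord_mod_eq (cg _ _ (modn_mod _ _))) (ord_mod_eq (gK i)) ord_mod_val.
exists (ord_mod (g j)); rewrite gjP /=; apply/eqP.
by rewrite (cf _ _ (modn_mod _ _)) fK modn_small.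
Qed.

Lemma mem_img_mod_ord x : (ord_mod (f x) \in img_mod f P) = (ord_mod x \in P).
Proof.
have [_ cg gK _] := fg.
by rewrite mem_img_mod; congr (_ \in P); apply: ord_mod_eq; rewrite (cg _ _ (modn_mod _ _)) gK.
Qed.

End ImgMod.

Lemma typeI_duadic_existsE q m s t : 0 < m -> coprime q m -> coprime s m ->
  typeI_duadic_exists q m s t <-> exists p, duadic_indicator m q s t p.
Proof.
move=> m_gt0 co_qm co_sm.
have [u /mul_mod_inverse qu] := inv_mod_exists m_gt0 co_qm.
have [v /(rho_map_mod_inverse t m_gt0) sv] := inv_mod_exists m_gt0 co_sm.
split=> [[P [muP [rhoPU rhoPI]]]|[p [p_mod p_mu p_rho]]].
  have rhoPC (j : 'I_m) : (j \in rho s t P) = (j \notin P).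
    move/setP/(_ j): rhoPU; move/setP/(_ j): rhoPI; rewrite !inE.
    by case: (j \in P); case: (j \in rho s t P).
  exists (fun x => ord_mod m_gt0 x \in P); split=> x.
  - by rewrite (ord_mod_eq m_gt0 (modn_mod x m)).
  - by rewrite -[in LHS]muP (mem_img_mod_ord _ _ qu).
  - by rewrite -[ord_mod _ x \in P](mem_img_mod_ord _ _ sv) -/(rho s t P) rhoPC negbK.
set P := [set i : 'I_m | p i].
have [_ _ _ quK] := qu; have [_ _ _ svK] := sv.
have p_qu j : p (u * j) = p j by rewrite -p_mu (pred_mod_eq p_mod (quK j)).
have p_sv j : p (v * j + t * m.-1) = ~~ p j.
  by rewrite -(pred_mod_eq p_mod (svK j)) p_rho negbK.
exists P; split; last split; apply/setP=> j.
- by rewrite (mem_img_mod _ _ qu) !inE /= p_mod p_qu.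
- by rewrite in_setU in_setT (mem_img_mod _ _ sv) !inE /= p_mod p_sv orbN.
- by rewrite in_setI in_set0 (mem_img_mod _ _ sv) !inE /= p_mod p_sv andbN.
Qed.

Lemma duadic_indicator_lift d n q s t p : d %| n ->
  duadic_indicator d q (s %% d) (t %% d) p -> duadic_indicator n q s t p.
Proof.
move=> dn [p_mod p_mu p_rho]; split=> // x.
  by apply: pred_mod_eq p_mod _; apply: eqm_dvd dn _; rewrite modn_mod.
rewrite -p_rho; apply: pred_mod_eq p_mod _.
by apply: eqm_mul; rewrite ?modn_mod //; apply: eqm_add; rewrite ?modn_mod.
Qed.

Lemma duadic_indicator_restrict d n q s t p L x0 : coprime d n -> odd L ->
    (forall x, iter L (rho_map s t) x = rho_map s t x %[mod d]) ->
    iter L (rho_map s t) x0 = x0 %[mod n] -> q * x0 = x0 %[mod n] ->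
  duadic_indicator (d * n) q s t p ->
  duadic_indicator d q (s %% d) (t %% d) (fun x => p (chinese d n x x0)).
Proof.
move=> co_dn oddL Ld Lx0 qx0 [p_mod p_mu p_rho].
have p_crt a b : a = b %[mod d] -> a = b %[mod n] -> p a = p b.
  move=> Ed En; apply: pred_mod_eq p_mod _; apply/eqP.
  by rewrite chinese_remainder // Ed En !eqxx.
split=> x /=.
- by apply: p_crt; rewrite !(chinese_modl co_dn, chinese_modr co_dn) ?modn_mod.
- rewrite -(p_mu (chinese d n x x0)); apply: p_crt;
    rewrite !(chinese_modl co_dn, chinese_modr co_dn).
    by apply: eqm_mul => //; rewrite chinese_modl.
  by rewrite -[x0 %% n]qx0; apply: eqm_mul => //; rewrite chinese_modr.
rewrite -[RHS]addTb -oddL -(iter_flip_parity p_rho); apply: p_crt.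
  rewrite Ld chinese_modl //; apply: etrans (_ : _ = rho_map s t x %[mod d]) _.
    by apply: eqm_mul; rewrite ?modn_mod //; apply: eqm_add; rewrite ?modn_mod.
  by apply: rho_map_mod_compatible; rewrite chinese_modl.
rewrite chinese_modr // -Lx0; apply: iter_mod_compatible (@rho_map_mod_compatible n s t) _ _ _.
by rewrite chinese_modr.
Qed.

Lemma odd_part_odd n : odd n`_(2^').
Proof. by have := part_pnat (2^') n; rewrite p'natE // dvdn2 negbK; apply. Qed.

Lemma totient_exp2 v : totient (2 ^ v) = 2 ^ v.-1.
Proof. by case: v => // v; rewrite totient_pfactor // mul1n. Qed.

Lemma exists_odd_iterate v n s t : odd n -> coprime s (2 ^ v) -> coprime s n ->
  exists L N, [/\ odd L, coprime N n,
    forall x, iter L (rho_map s t) x = rho_map s t x %[mod 2 ^ v]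
  & iter N (iter L (rho_map s t)) 0 = 0 %[mod n]].
Proof.
move=> odd_n co_s2 co_sn.
set Td := totient (2 ^ v) * 2 ^ v; set Tn := totient n * n.
have Tn_gt0 : 0 < Tn by rewrite muln_gt0 totient_gt0 andbb odd_gt0.
(* L is 1 modulo the period Td of rho on Z_(2^v), a 2-power, and kills the odd
   part beta of the period Tn on Z_n. *)
set N := Tn`_2; set beta := Tn`_(2^'); set L := beta ^ totient Td.
have co_beta_Td : coprime beta Td.
  by rewrite /Td totient_exp2 -expnD coprimeXr // coprimen2 odd_part_odd.
have L_1 : L = 1 %[mod Td] by apply: Euler_exp_totient.
have beta_L : beta %| L.
  by rewrite dvdn_exp // totient_gt0 muln_gt0 totient_gt0 !expn_gt0.
exists L, N; split.
- by rewrite oddX odd_part_odd orbT.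
- by rewrite /N p_part coprimeXl // coprime2n.
- move=> x; rewrite -[rho_map s t x]/(iter 1 (rho_map s t) x).
  have rho_period := rho_map_iter_period t co_s2.
  exact: iter_mod_period (@rho_map_mod_compatible _ s t) rho_period _ _ _ L_1.
rewrite -iterM -[0 in RHS]/(iter 0 (rho_map s t) 0).
apply: iter_mod_period (@rho_map_mod_compatible _ s t) (rho_map_iter_period t co_sn) _ _ _ _.
rewrite -/Tn mod0n; apply/eqP; change (Tn %| N * L).
by rewrite -(partnC 2 Tn_gt0) dvdn_mul.
Qed.

Theorem lemma3p9 (q n s t : nat) :
  prime_power q -> 0 < n -> coprime q n ->
  s < n -> coprime s n -> t < n -> q * t = t %[mod n] ->
  typeI_duadic_exists q n s t <->
  typeI_duadic_exists q (2 ^ logn 2 n) (s %% 2 ^ logn 2 n) (t %% 2 ^ logn 2 n).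
Proof.
move=> _ n_gt0 co_qn _ co_sn _ qt.
set d := 2 ^ logn 2 n; set n' := n`_(2^').
have n_eq : d * n' = n by rewrite /d -p_part partnC.
have co_dn' : coprime d n' by rewrite /d -p_part coprime_partC.
have d_gt0 : 0 < d by rewrite expn_gt0.
have d_n : d %| n by rewrite -n_eq dvdn_mulr.
have n'_n : n' %| n by rewrite -n_eq dvdn_mull.
have co_sd := coprime_dvdr d_n co_sn; have co_sn' := coprime_dvdr n'_n co_sn.
rewrite (typeI_duadic_existsE t n_gt0 co_qn co_sn).
rewrite (typeI_duadic_existsE (t %% d) d_gt0 (coprime_dvdr d_n co_qn)) ?coprime_modl //.
split=> [[p p_n]|[p p_d]]; last by exists p; apply: duadic_indicator_lift d_n p_d.
have [L [N [odd_L co_Nn' L_rho LN]]] := exists_odd_iterate t (odd_part_odd n) co_sd co_sn'.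
have [x0 [Lx0 qx0]] : exists x0, iter L (rho_map s t) x0 = x0 %[mod n']
                                 /\ q * x0 = x0 %[mod n'].
  apply: affine_common_fixed_point (part_gt0 _ _) _ _ co_Nn' LN.
    exact: affine_iter (rho_map_affine s t) L.
  apply: (iter_mod_commute (@rho_map_mod_compatible _ s t)).
  by apply: rho_map_mulC; apply: eqm_dvd n'_n qt.
rewrite -n_eq in p_n.
exists (fun x => p (chinese d n' x x0)).
exact: duadic_indicator_restrict co_dn' odd_L L_rho Lx0 qx0 p_n.
Qed.
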